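(* For every network $\mathcal N=(\mathcal G,S,\rho)$, every prime power $q$ and every nonnegative integer security level $r$, the secure computing capacity of the algebraic sum $f$ over $\mathbb F_q$ satisfies $$\widehat{\mathcal C}(\mathcal N,f,r)\le \min_{\substack{(W,C)\in\mathcal W_r\times\Lambda(\mathcal N):\\ W\subseteq C,\ D_W\subseteq I_C}}\big(|C|-|W|\big).$$
   Context: Network model: $\mathcal G=(\mathcal V,\mathcal E)$ is a finite directed acyclic graph (multiple edges between two nodes allowed). For $e\in\mathcal E$, $\mathrm{tail}(e)$ and $\mathrm{head}(e)$ denote its tail and head; $\mathcal E_{\rm in}(u)$, $\mathcal E_{\rm out}(u)$ are the sets of input and output edges of node $u$. A path from node $u$ (or edge $e_1$) to node $v$ (or edge $e_m$) is a sequence of edges $(e_1,\dots,e_m)$ with $\mathrm{tail}(e_1)=u$, $\mathrm{head}(e_m)=v$, $\mathrm{tail}(e_i)=\mathrm{head}(e_{i-1})$; a single edge is a path from itself to itself. For a node $\sigma$ and edge $e$, $\sigma\to e$ means there is a path from $\sigma$ whose last edge is $e$. $S=\{\sigma_1,\dots,\sigma_s\}\subset\mathcal V$ is the set of source nodes, each with no input edges; $\rho\in\mathcal V\setminus S$ is the sink, with no output edges; every node $u\ne\rho$ has a directed path to $\rho$; the sources are exactly the nodes without input edges. $\mathcal N=(\mathcal G,S,\rho)$. For disjoint node sets $U,V$, a cut separating $V$ from $U$ is an edge set $C$ such that after deleting $C$ there is no path from any $u\in U$ to any $v\in V$; $\mathrm{mincut}(U,V)$ is the minimum size of such a cut, and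 $\mathrm{mincut}(u,v)$ for singletons. Cut sets: for $C\subseteq\mathcal E$, $D_C=\{\sigma\in S:\exists e\in C,\ \sigma\to e\}$, $I_C=\{\sigma\in S:$ there is no path from $\sigma$ to $\rho$ after deleting the edges of $C\}$; $\Lambda(\mathcal N)=\{C\subseteq\mathcal E: I_C\neq\emptyset\}$. For a nonnegative integer $r$ (the security level), $\mathcal W_r=\{W\subseteq\mathcal E:|W|\le r\}$ (it contains $\emptyset$). Secure model: $q$ is a prime power and $f:\mathbb F_q^s\to\mathbb F_q$, $f(m_1,\dots,m_s)=\sum_{i=1}^s m_i$; each edge carries one symbol of $\mathbb F_q$ per network use. For positive integers $\ell,n$, an $(\ell,n)$ secure network code is as follows. Source $\sigma_i$ holds a message $\mathbf M_i=(M_{i,1},\dots,M_{i,\ell})$ of i.i.d. uniform elements of $\mathbb F_q$ and a key $\mathbf K_i$ uniform on a finite set $\mathcal K_i$ (chosen as part of the code); all $\mathbf M_i,\mathbf K_i$ are mutually independent. For each edge $e$ there is a local encoding function: if $\mathrm{tail}(e)=\sigma_i$, a map $\mathbb F_q^\ell\times\mathcal K_i\to\mathbb F_q^n$ applied to $(\mathbf m_i,\mathbf k_i)$; otherwise a map $\prod_{d\in\mathcal E_{\rm in}(\mathrm{tail}(e))}\mathbb F_q^n\to\mathbb F_q^n$ applied to the messages on the input edges of $\mathrm{tail}(e)$. There is a decoding function $\psi:\prod_{d\in\mathcal E_{\rm in}(\rho)}\mathbb F_q^n\to\mathbb F_q^\ell$. Recursively, the message $\mathbf Y_e$ on each edge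 is a function of $(\mathbf M_S,\mathbf K_S)$, where $\mathbf M_S=(\mathbf M_1,\dots,\mathbf M_s)$, $\mathbf K_S=(\mathbf K_1,\dots,\mathbf K_s)$; $\mathbf Y_W=(\mathbf Y_e:e\in W)$. The code is admissible (for security level $r$) if (computability) for all values $\mathbf m_S,\mathbf k_S$ the decoder outputs $\sum_{i=1}^s\mathbf m_i$ (componentwise sum in $\mathbb F_q^\ell$), and (security) $I(\mathbf Y_W;\mathbf M_S)=0$ for every $W\in\mathcal W_r$. Its rate is $\ell/n$. $R\ge0$ is achievable if for every $\epsilon>0$ there is an admissible $(\ell,n)$ code with $\ell/n>R-\epsilon$. The secure computing capacity $\widehat{\mathcal C}(\mathcal N,f,r)$ is the maximum achievable rate. *)

From HB Require Import structures.
From mathcomp Require Import all_boot all_order all_algebra.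
From mathcomp Require Import reals exp.

Unset Implicit Arguments.
Unset Strict Implicit.
Unset Printing Implicit Defensive.

Import Order.TTheory GRing.Theory Num.Theory.
Local Open Scope ring_scope.

Section Graph.
Variables (V E : finType) (tail head : E -> V).

Definition epath (e1 : E) (es : seq E) : bool :=
  path (fun d e => head d == tail e) e1 es.

Definition path_avoiding (ok : E -> bool) (u v : V) : Prop :=
  exists (e1 : E) (es : seq E),
    [/\ epath e1 es, tail e1 = u, head (last e1 es) = v & all ok (e1 :: es)].

Definition node_path (u v : V) : Prop := path_avoiding (fun _ => true) u v.

Definition reaches_edge (u : V) (e : E) : Prop :=
  exists (e1 : E) (es : seq E), [/\ epath e1 es, tail e1 = u & last e1 es = e].

Definition acyclic : Prop := forall u : V, ~ node_path u u.

(* The network N = (G, S, rho): the sources are S = {sigma_0, ..., sigma_{s-1}}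
   given by an injective map sigma : 'I_s -> V. *)
Definition network (s : nat) (sigma : 'I_s -> V) (rho : V) : Prop :=
  [/\ acyclic,
      injective sigma,
      (forall i : 'I_s, sigma i != rho) &
    [/\
      (forall (i : 'I_s) (e : E), head e != sigma i),
      (forall e : E, tail e != rho),
      (forall u : V, u != rho -> node_path u rho) &
      (forall u : V, (forall e : E, head e != u) -> exists i : 'I_s, sigma i = u)]].

Definition D_set (s : nat) (sigma : 'I_s -> V) (C : {set E}) (v : V) : Prop :=
  (exists i : 'I_s, sigma i = v) /\ exists2 e, e \in C & reaches_edge v e.

Definition I_set (s : nat) (sigma : 'I_s -> V) (rho : V) (C : {set E}) (v : V)
  : Prop :=
  (exists i : 'I_s, sigma i = v) /\ ~ path_avoiding (fun e => e \notin C) v rho.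

Definition in_Lambda (s : nat) (sigma : 'I_s -> V) (rho : V) (C : {set E})
  : Prop := exists v, I_set s sigma rho C v.

End Graph.

Section MutualInformation.
Variables (R : realType) (Omega A B : finType).

Definition uprob (P : pred Omega) : R := #|[set w | P w]|%:R / #|Omega|%:R.

Definition mutual_info (X : Omega -> A) (Y : Omega -> B) : R :=
  \sum_(a : A) \sum_(b : B)
     let pab := uprob (fun w => (X w == a) && (Y w == b)) in
     let pa := uprob (fun w => X w == a) in
     let pb := uprob (fun w => Y w == b) in
     if pab == 0 then 0 else pab * ln (pab / (pa * pb)).

End MutualInformation.

Section Codes.
Variables (V E : finType) (tail head : E -> V) (s : nat) (sigma : 'I_s -> V)
          (rho : V) (F : finFieldType) (l n : nat).

Record code := Code {
  keyT : 'I_s -> finType;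
  enc_src : forall i : 'I_s, E -> 'rV[F]_l -> keyT i -> 'rV[F]_n;
  enc_int : forall e : E, ({d : E | head d == tail e} -> 'rV[F]_n) -> 'rV[F]_n;
  dec : ({d : E | head d == rho} -> 'rV[F]_n) -> 'rV[F]_l }.

Definition msgT := {ffun 'I_s -> 'rV[F]_l}.
Definition keysT (c : code) := {dffun forall i : 'I_s, keyT c i}.

Definition code_step (c : code) (m : msgT) (k : keysT c)
    (Y : {ffun E -> 'rV[F]_n}) : {ffun E -> 'rV[F]_n} :=
  [ffun e => match [pick i : 'I_s | sigma i == tail e] with
             | Some i => enc_src c i e (m i) (k i)
             | None => enc_int c e (fun d => Y (val d))
             end].

(* The message Y_e on each edge as a function of (m_S, k_S).  Since the
   graph is acyclic, every path has at most #|E| edges, so #|E| rounds of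
   the local recursion determine all edge messages. *)
Definition edge_msgs (c : code) (m : msgT) (k : keysT c) : {ffun E -> 'rV[F]_n} :=
  iter #|E| (code_step c m k) [ffun => 0].

(* sample space of (M_S, K_S), uniform *)
Definition sampleT (c : code) := (msgT * keysT c)%type.

Definition Y_W (c : code) (W : {set E}) (w : sampleT c)
  : {ffun {e : E | e \in W} -> 'rV[F]_n} :=
  [ffun e => edge_msgs c w.1 w.2 (val e)].

Definition M_S (c : code) (w : sampleT c) : msgT := w.1.

Definition admissible (R : realType) (r : nat) (c : code) : Prop :=
  [/\ (forall i : 'I_s, 0 < #|keyT c i|)%N,
      (forall (m : msgT) (k : keysT c),
          dec c (fun d => edge_msgs c m k (val d)) = \sum_(i < s) m i) &
      (forall W : {set E}, (#|W| <= r)%N ->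
          mutual_info R (sampleT c) _ _ (Y_W c W) (M_S c) = 0)].

End Codes.

Definition achievable (R : realType) (V E : finType) (tail head : E -> V)
    (s : nat) (sigma : 'I_s -> V) (rho : V) (F : finFieldType) (r : nat)
    (Rate : R) : Prop :=
  0 <= Rate /\
  forall eps : R, 0 < eps ->
    exists (l n : nat) (c : code V E tail head s rho F l n),
      [/\ (0 < l)%N, (0 < n)%N, admissible V E tail head s sigma rho F l n R r c &
          Rate - eps < l%:R / n%:R].

From HB Require Import structures.
From mathcomp Require Import all_boot all_order all_algebra.
From mathcomp Require Import reals exp.
From mathcomp Require Import lra.
From Stdlib Require Import FunctionalExtensionality ClassicalEpsilon.
Import Order.TTheory GRing.Theory Num.Theory.
Local Open Scope ring_scope.

(* Fix an admissible (l, n) code, a wiretap set W (|W| <= r) and a cut C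
   with W \subseteq C, D_W \subseteq I_C, and a source sigma_i0 in I_C.
   We show l <= n (|C| - |W|); the rate bound of theorem1 follows at once.

   1. Zero mutual information between Y_W and M_S forces the joint support
      of (Y_W, M_S) to be the product of the marginal supports (a Gibbs
      inequality argument based on ln x >= 1 - 1/x).  Hence every message
      vector can be paired with some key producing a fixed observation on W.
   2. On an acyclic graph the edge messages are the fixpoint of the local
      encoding recursion; consequently the message on an edge only depends
      on the inputs of the sources above it, and the messages entering the
      sink only depend on the messages on C and the inputs of the sources
      outside I_C.
   3. Let source i0 send t and every other source 0; sources in I_C use the
      key hiding t on W (step 1), the others a fixed key.  Since D_W is inside
      I_C, the observation on W does not depend on t (step 2), and since the
      sum t is decodable, t is determined by the messages on C \ W: this is
      an injection F^l -> F^(n |C \ W|). *)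

Lemma ln_ge_1V (R : realType) (x : R) : 0 < x -> 1 - x^-1 <= ln x.
Proof.
move=> x_gt0; have := expR_ge1Dx (ln x^-1).
by rewrite lnK ?posrE ?invr_gt0 // lnV ?posrE //; lra.
Qed.

Lemma ltr_sum_one (R : numDomainType) (I : finType) (f g : I -> R) (i0 : I) :
  (forall i, f i <= g i) -> f i0 < g i0 -> \sum_i f i < \sum_i g i.
Proof.
move=> le_fg lt_fg0; rewrite (bigD1 i0) //= [X in _ < X](bigD1 i0) //=.
by apply: ltr_leD => //; apply: ler_sum.
Qed.

Section UniformProbability.
Variables (R : realType) (Omega : finType).
Local Notation Pr := (uprob R Omega).

Lemma uprob_ge0 (P : pred Omega) : 0 <= Pr P.
Proof. by rewrite /uprob divr_ge0. Qed.

Lemma uprob_gt0 (P : pred Omega) (w : Omega) : P w -> 0 < Pr P.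
Proof.
by move=> Pw; rewrite /uprob divr_gt0 // ltr0n; apply/card_gt0P; exists w; rewrite ?inE.
Qed.

Lemma uprob_le (P Q : pred Omega) : (forall w, P w -> Q w) -> Pr P <= Pr Q.
Proof.
move=> PQ; rewrite /uprob ler_wpM2r ?invr_ge0 // ler_nat.
by apply: subset_leq_card; apply/subsetP => w; rewrite !inE => /PQ.
Qed.

Lemma uprob_partition (B : finType) (P : pred Omega) (Y : Omega -> B) :
  \sum_(b : B) Pr (fun w => P w && (Y w == b)) = Pr P.
Proof.
rewrite /uprob -mulr_suml -natr_sum; congr (_%:R / _).
rewrite -sum1_card (partition_big (P := mem [set w | P w]) Y predT) //=.
by apply: eq_bigr => b _; rewrite -sum1_card; apply: eq_bigl => w; rewrite !inE.
Qed.

Lemma uprob_total (B : finType) (Y : Omega -> B) : (0 < #|Omega|)%N ->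
  \sum_(b : B) Pr (fun w => Y w == b) = 1.
Proof.
move=> Omega_gt0; transitivity (Pr predT); first by rewrite -(uprob_partition _ predT Y).
rewrite /uprob.
have -> : [set w | predT w] = [set: Omega] by apply/setP => w; rewrite !inE.
by rewrite cardsT divff // pnatr_eq0 -lt0n.
Qed.

End UniformProbability.

Section ZeroMutualInformation.
Variables (R : realType) (Omega A B : finType) (X : Omega -> A) (Y : Omega -> B).

Let pab a b := uprob R Omega (fun w => (X w == a) && (Y w == b)).
Let pa a := uprob R Omega (fun w => X w == a).
Let pb b := uprob R Omega (fun w => Y w == b).

Lemma mi_summand_lb a b :
  pab a b - pa a * pb b <=
  (if pab a b == 0 then 0 else pab a b * ln (pab a b / (pa a * pb b))).
Proof.
case: eqP => [->|/eqP pab_neq0].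
  by rewrite sub0r oppr_le0 mulr_ge0 // uprob_ge0.
have pab_gt0 : 0 < pab a b by rewrite lt0r pab_neq0 uprob_ge0.
have pa_gt0 : 0 < pa a by apply: lt_le_trans pab_gt0 _; apply: uprob_le => w /andP[].
have pb_gt0 : 0 < pb b by apply: lt_le_trans pab_gt0 _; apply: uprob_le => w /andP[].
have := @ln_ge_1V R _ (divr_gt0 pab_gt0 (mulr_gt0 pa_gt0 pb_gt0)).
move/(ler_wpM2l (ltW pab_gt0)); apply: le_trans.
by rewrite mulrBr mulr1 invf_div [X in _ <= _ - X]mulrCA divff ?mulr1 // gt_eqF.
Qed.

Lemma sum_joint_sub_product : (0 < #|Omega|)%N ->
  \sum_a \sum_b (pab a b - pa a * pb b) = 0.
Proof.
move=> Omega_gt0.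
have joint : \sum_a \sum_b pab a b = 1.
  by under eq_bigr do rewrite uprob_partition; rewrite uprob_total.
have product : \sum_a \sum_b (pa a * pb b) = 1.
  under eq_bigr do rewrite -mulr_sumr uprob_total // mulr1.
  by rewrite uprob_total.
by under eq_bigr do rewrite sumrB; rewrite sumrB joint product subrr.
Qed.

Lemma mi0_product_support : mutual_info R Omega A B X Y = 0 ->
  forall w w', exists w'', X w'' = X w /\ Y w'' = Y w'.
Proof.
move=> mi0 w w'; set a := X w; set b := Y w'.
case: (boolP (pab a b == 0)) => [/eqP pab0|]; last first.
  rewrite /pab /uprob mulf_eq0 invr_eq0 !pnatr_eq0 negb_or => /andP[].
  by rewrite -lt0n => /card_gt0P[w'' /[!inE] /andP[/eqP <- /eqP <-]] _; exists w''.
exfalso.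
have pa_gt0 : 0 < pa a by apply: (uprob_gt0 _ _ _ w); rewrite /a.
have pb_gt0 : 0 < pb b by apply: (uprob_gt0 _ _ _ w'); rewrite /b.
have : \sum_a \sum_b (pab a b - pa a * pb b) < mutual_info R Omega A B X Y.
  apply: (ltr_sum_one _ _ _ _ a) => [a'|]; first by apply: ler_sum => b' _; apply: mi_summand_lb.
  apply: (ltr_sum_one _ _ _ _ b) => [b'|]; first exact: mi_summand_lb.
  by rewrite /= -/(pab a b) pab0 eqxx sub0r oppr_lt0 mulr_gt0.
by rewrite sum_joint_sub_product ?mi0 ?ltxx //; apply/card_gt0P; exists w.
Qed.

End ZeroMutualInformation.

Section AcyclicGraphs.
Variables (V E : finType) (tail head : E -> V).
Hypothesis acyc : acyclic V E tail head.

Definition depth_lt (j : nat) (e : E) : Prop :=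
  forall e1 es, epath V E tail head e1 es -> last e1 es = e -> (size es < j)%N.

Lemma epath_uniq es e1 : epath V E tail head e1 es -> uniq (e1 :: es).
Proof.
elim: es e1 => [//|e2 es IH] e1 p12; have /andP[h12 p2] := p12.
have /= /andP[-> ->] := IH e2 p2; rewrite !andbT; apply/negP => e1_in.
move: p12; rewrite /epath; move: (e2 :: es) e1_in => t /splitPr[p1 p2'].
rewrite cat_path /= => /and3P[p1_path ends _].
apply: (acyc (tail e1)); exists e1, p1; split => //; [exact/eqP | exact/allP].
Qed.

Lemma depth_lt_card e : depth_lt #|E| e.
Proof.
move=> e1 es p _; have := max_card (mem (e1 :: es)).
by rewrite (card_uniqP (epath_uniq _ _ p)).
Qed.

Lemma epath_rcons e1 es e :
  epath V E tail head e1 es -> head (last e1 es) == tail e ->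
  epath V E tail head e1 (rcons es e).
Proof. by move=> p he; rewrite /epath rcons_path; apply/andP. Qed.

Lemma depth_lt_in {j e d} : depth_lt j.+1 e -> head d == tail e -> depth_lt j d.
Proof.
move=> de hd e1 es p last_d; have := de e1 (rcons es e); rewrite size_rcons ltnS.
by apply; rewrite ?last_rcons // epath_rcons ?last_d.
Qed.

Lemma depth_lt0 {e} : ~ depth_lt 0 e.
Proof. by move=> de; have := de e [::] isT erefl. Qed.

Definition reaches_avoiding (C : {set E}) (u : V) (e : E) : Prop :=
  exists e1 es, [/\ epath V E tail head e1 es, tail e1 = u, last e1 es = e &
                    all (fun x => x \notin C) (e1 :: es)].

Lemma reaches_edge_in {u d e} :
  reaches_edge V E tail head u d -> head d == tail e -> reaches_edge V E tail head u e.
Proof.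
move=> [e1 [es [p src last_d]]] hd.
by exists e1, (rcons es e); rewrite last_rcons epath_rcons ?last_d.
Qed.

Lemma reaches_avoiding_in {C u d e} :
  reaches_avoiding C u d -> head d == tail e -> e \notin C -> reaches_avoiding C u e.
Proof.
move=> [e1 [es [p src last_d avoid]]] hd eC; exists e1, (rcons es e).
by rewrite last_rcons epath_rcons ?last_d // -rcons_cons all_rcons eC.
Qed.

Lemma reaches_avoiding_sink {C u d v} :
  reaches_avoiding C u d -> head d = v -> path_avoiding V E tail head (fun x => x \notin C) u v.
Proof. by move=> [e1 [es [p src last_d avoid]]] hd; exists e1, es; rewrite last_d. Qed.

Section Evaluation.
Variables (s : nat) (sigma : 'I_s -> V) (rho : V) (F : finFieldType) (l n : nat).
Variable c : code V E tail head s rho F l n.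
Local Notation step := (code_step V E tail head s sigma rho F l n c).
Local Notation emsgs := (edge_msgs V E tail head s sigma rho F l n c).

Lemma iter_step_stable m k j (Y Y' : {ffun E -> 'rV[F]_n}) e :
  depth_lt j e -> iter j (step m k) Y e = iter j (step m k) Y' e.
Proof.
elim: j e => [|j IH] e de; first by case: (depth_lt0 de).
rewrite /= !ffunE; case: pickP => // _.
congr enc_int; apply: functional_extensionality => d.
exact: IH (depth_lt_in de (valP d)).
Qed.

Lemma edge_msgs_fix m k : step m k (emsgs m k) = emsgs m k.
Proof.
apply/ffunP => e; rewrite /edge_msgs -iterS iterSr.
exact/iter_step_stable/depth_lt_card.
Qed.

Lemma edge_msgs_agree {m k m' k'} (P : E -> Prop) :
  (forall e, P e -> emsgs m k e = emsgs m' k' e \/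
     ((forall i, sigma i == tail e -> m i = m' i /\ k i = k' i) /\
      (forall d, head d == tail e -> P d))) ->
  forall e, P e -> emsgs m k e = emsgs m' k' e.
Proof.
move=> closedP.
suff agree_j j e : depth_lt j e -> P e -> emsgs m k e = emsgs m' k' e.
  by move=> e; apply/agree_j/depth_lt_card.
elim: j e => [|j IH] e de Pe; first by case: (depth_lt0 de).
case: (closedP e Pe) => [//|[src_eq in_P]].
rewrite -(edge_msgs_fix m k) -(edge_msgs_fix m' k') !ffunE.
case: pickP => [i /src_eq[-> ->] //|_].
congr enc_int; apply: functional_extensionality => d.
exact: IH (depth_lt_in de (valP d)) (in_P _ (valP d)).
Qed.

Lemma edge_msgs_upstream (m m' : msgT s F l) (k k' : keysT V E tail head s rho F l n c) e :
  (forall i, reaches_edge V E tail head (sigma i) e -> m i = m' i /\ k i = k' i) ->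
  emsgs m k e = emsgs m' k' e.
Proof.
pose P d := forall i, reaches_edge V E tail head (sigma i) d -> m i = m' i /\ k i = k' i.
apply: (edge_msgs_agree P) => d Pd; right; split.
  by move=> i /eqP src_d; apply: Pd; exists d, [::].
by move=> d' hd' i reach; apply: Pd; apply: reaches_edge_in reach hd'.
Qed.

Lemma sink_msgs_determined (C : {set E}) (m m' : msgT s F l)
    (k k' : keysT V E tail head s rho F l n c) :
  (forall i, ~ I_set V E tail head s sigma rho C (sigma i) -> m i = m' i /\ k i = k' i) ->
  {in C, forall e, emsgs m k e = emsgs m' k' e} ->
  forall d, head d == rho -> emsgs m k d = emsgs m' k' d.
Proof.
move=> outside_eq C_eq d hd.
(* outside C, an edge is only reached by C-avoiding paths from sources
   that are not isolated from the sink by C *)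
pose P e := e \notin C -> forall i, reaches_avoiding C (sigma i) e ->
  ~ I_set V E tail head s sigma rho C (sigma i).
apply: (edge_msgs_agree P) => [e avoidP|]; last first.
  move=> dC i reach [_]; apply; exact: reaches_avoiding_sink reach (eqP hd).
case: (boolP (e \in C)) => eC; [left; exact: C_eq | right; split].
  move=> i /eqP src_e; apply/outside_eq/(avoidP eC).
  by exists e, [::]; split => //=; rewrite eC.
move=> d' hd' d'C i reach; apply: (avoidP eC i).
exact: reaches_avoiding_in reach hd' eC.
Qed.

End Evaluation.
End AcyclicGraphs.

Arguments edge_msgs_upstream {V E tail head} acyc {s sigma rho F l n c m m' k k' e}.
Arguments sink_msgs_determined {V E tail head} acyc {s sigma rho F l n c} C {m m' k k'}.

Section CutBound.
Variables (R : realType) (V E : finType) (tail head : E -> V) (s : nat)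
  (sigma : 'I_s -> V) (rho : V) (F : finFieldType) (r l n : nat).
Variable c : code V E tail head s rho F l n.
Hypothesis adm : admissible V E tail head s sigma rho F l n R r c.
Local Notation emsgs := (edge_msgs V E tail head s sigma rho F l n c).
Local Notation YW := (Y_W V E tail head s sigma rho F l n c).
Local Notation msg := (msgT s F l).
Local Notation keys := (keysT V E tail head s rho F l n c).

Lemma secure_observation_consistent (W : {set E}) : (#|W| <= r)%N ->
  forall (m m' : msg) (k' : keys), exists k, YW W (m, k) = YW W (m', k').
Proof.
case: adm => _ _ secure W_small m m' k'.
have [[m'' k] [obs msg_eq]] :=
  mi0_product_support _ _ _ _ _ _ (secure W W_small) (m', k') (m, k').
by exists k; rewrite /M_S /= in msg_eq; rewrite -msg_eq.
Qed.

Variables (W C : {set E}) (i0 : 'I_s).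
Hypotheses (acyc : acyclic V E tail head) (W_small : (#|W| <= r)%N)
  (WC : W \subset C)
  (DW_IC : forall v, D_set V E tail head s sigma W v ->
                     I_set V E tail head s sigma rho C v)
  (i0_IC : I_set V E tail head s sigma rho C (sigma i0)).

Let IC i := I_set V E tail head s sigma rho C (sigma i).

Let key0 : keys :=
  finfun (fun i => xchoose (card_gt0P (let: And3 keys_ne0 _ _ := adm in keys_ne0 i))).

Definition single_msg (t : 'rV[F]_l) : msg := [ffun i => if i == i0 then t else 0].

Lemma sum_single_msg t : \sum_i single_msg t i = t.
Proof.
rewrite (bigD1 i0) //= big1 => [|i /negbTE i_neq]; last by rewrite ffunE i_neq.
by rewrite ffunE eqxx addr0.
Qed.

Definition hiding_key t : keys :=
  odflt key0 [pick k | YW W (single_msg t, k) == YW W (single_msg 0, key0)].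

Lemma hiding_keyP t : YW W (single_msg t, hiding_key t) = YW W (single_msg 0, key0).
Proof.
rewrite /hiding_key; case: pickP => [k /eqP //|none].
have [k obs] := secure_observation_consistent _ W_small (single_msg t) (single_msg 0) key0.
by have := none k; rewrite obs eqxx.
Qed.

Definition cut_key t : keys :=
  finfun (fun i => if excluded_middle_informative (IC i) then hiding_key t i else key0 i).

(* Since D_W lies inside I_C, the cut keys still hide t on W. *)
Lemma cut_key_hides t : YW W (single_msg t, cut_key t) = YW W (single_msg 0, key0).
Proof.
rewrite -(hiding_keyP t); apply/ffunP => e; rewrite !ffunE /=.
apply: (edge_msgs_upstream acyc) => i reach; split => //.
have ICi : IC i by apply: DW_IC; split; [exists i | exists (val e) => //; exact: valP].
by rewrite /cut_key ffunE; case: excluded_middle_informative.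
Qed.

Lemma cut_encoding_inj :
  injective (fun t => [ffun e : {e | e \in C :\: W} =>
                        emsgs (single_msg t) (cut_key t) (val e)]).
Proof.
move=> t t' same_CW; case: adm => _ decodable _.
rewrite -(sum_single_msg t) -(sum_single_msg t').
rewrite -(decodable _ (cut_key t)) -(decodable _ (cut_key t')).
congr dec; apply: functional_extensionality => d.
apply: (sink_msgs_determined acyc C) (valP d) => [i notIC|e eC].
  have i_neq : i != i0 by apply: contra_notN notIC => /eqP ->.
  rewrite !ffunE (negbTE i_neq); split => //.
  by case: excluded_middle_informative.
case: (boolP (e \in W)) => eW.
  have obs u := congr1 (fun g : {ffun {e | e \in W} -> 'rV[F]_n} => g (exist _ e eW))
    (cut_key_hides u).
  by have := obs t; have := obs t'; rewrite !ffunE /= => -> ->.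
have eCW : e \in C :\: W by rewrite inE eW eC.
have := congr1 (fun g : {ffun {e | e \in C :\: W} -> 'rV[F]_n} => g (exist _ e eCW)) same_CW.
by rewrite !ffunE.
Qed.

(* Counting: |F|^l <= |F|^(n |C \ W|). *)
Lemma code_length_bound : (l <= n * (#|C| - #|W|))%N.
Proof.
have card_CW : #|{: {e : E | e \in C :\: W}}| = (#|C| - #|W|)%N.
  by rewrite -[in RHS](setIidPr WC) -cardsD card_sig; apply: eq_card.
have := leq_card _ cut_encoding_inj.
rewrite card_mx card_ffun card_mx card_CW -expnM leq_exp2l ?card_finNzRing_gt1 //.
by rewrite !mul1n.
Qed.

End CutBound.

Arguments code_length_bound {R V E tail head s sigma rho F r l n c} adm {W C} i0.

Theorem theorem1 (R : realType) (V E : finType) (tail head : E -> V)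
    (s : nat) (sigma : 'I_s -> V) (rho : V)
    (HN : network V E tail head s sigma rho)
    (F : finFieldType) (r : nat) (Rate : R)
    (Hach : achievable R V E tail head s sigma rho F r Rate)
    (W C : {set E})
    (HW : (#|W| <= r)%N)
    (HC : in_Lambda V E tail head s sigma rho C)
    (HWC : W \subset C)
    (HDI : forall v : V, D_set V E tail head s sigma W v ->
                         I_set V E tail head s sigma rho C v) :
  Rate <= (#|C| - #|W|)%:R.
Proof.
have [acyc _ _ _] := HN.
have [_ [[i0 <-] no_path]] := HC.
have i0_IC : I_set V E tail head s sigma rho C (sigma i0) by split; [exists i0 |].
case: Hach => _ achieve; rewrite leNgt; apply/negP => too_large.
have gap_gt0 : 0 < Rate - (#|C| - #|W|)%:R by rewrite subr_gt0.
have [l [n [c [_ n_gt0 adm rate_close]]]] := achieve _ gap_gt0.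
have len_bound := code_length_bound adm i0 acyc HW HWC HDI i0_IC.
have : l%:R / n%:R <= (#|C| - #|W|)%:R :> R.
  by rewrite ler_pdivrMr ?ltr0n // -natrM ler_nat mulnC.
lra.
Qed.
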